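(* Let $G=G_1\times G_2$ be a finite group, $p$ a prime with $|G_2|_p>1$, and let $\chi$ be a $p$-vanishing character of $G$. Then $\chi=\sum_i\eta_i\sigma_i$, where the $\eta_i$ are pairwise distinct irreducible characters of $G_1$ and the $\sigma_i$ are $p$-vanishing characters of $G_2$. Moreover $\chi_1:=\sum_i l_p(\sigma_i)\eta_i$ is a $p$-vanishing character of $G_1$ and $l_p(\chi_1)=l_p(\chi)$.
   Context: A character of a finite group is $p$-vanishing if it vanishes on every element of order divisible by $p$. For a character $\chi$ of a finite group $H$ with Sylow $p$-subgroup $S$, the $p$-level $l_p(\chi)$ is the maximal $l\ge0$ such that $\chi|_S-l\rho_S^{\rm reg}$ is a character (non-negative integral combination of irreducibles, possibly zero) of $S$, $\rho_S^{\rm reg}$ being the regular character. $|G_2|_p$ is the $p$-part of $|G_2|$. *)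

From HB Require Import structures.
From mathcomp Require Import all_boot all_order all_algebra all_fingroup all_solvable all_field all_character.
Set Implicit Arguments. Unset Strict Implicit. Unset Printing Implicit Defensive.
Import Order.TTheory GRing.Theory Num.Theory.
Local Open Scope ring_scope.

Definition p_vanishing (gT : finGroupType) (H : {group gT}) (p : nat)
    (phi : 'CF(H)) : Prop :=
  phi \is a character /\ (forall x, x \in H -> (p %| #[x]%g)%N -> phi x = 0).

Definition sylow_of (gT : finGroupType) (p : nat) (H : {group gT}) : {group gT} :=
  odflt [1 gT]%G [pick S in 'Syl_p(H)%g].

(* Any such l satisfies l <= l * |S| <= phi(1), so the maximum may be taken
   over l <= truncn (phi 1). *)
Definition plevel (gT : finGroupType) (p : nat) (H : {group gT})
    (phi : 'CF(H)) : nat :=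
  (\max_(l < (Num.truncn (phi 1%g)).+1
          | (('Res[sylow_of p H] phi - (l%:R) *: cfReg (sylow_of p H))
              \is a character)%R) (l : nat))%N.

(* A p-vanishing character restricts to a Sylow p-subgroup S as a multiple of
   the regular character of S, so its p-level is psi(1) / |H|_p.  Decomposing
   chi along the irreducibles of G1 gives chi = sum_i eta_i x sigma_i, and
   evaluating chi at x y (x in G1, y in G2) and using the linear independence
   of the eta_i shows that each sigma_i vanishes wherever chi does on G1 x y;
   since p | o(y) implies p | o(xy), the sigma_i are p-vanishing.  On G1 one
   then has chi = |G2|_p chi_1, which transfers p-vanishing and, comparing
   degrees, the p-level. *)
From HB Require Import structures.
From mathcomp Require Import all_boot all_order all_algebra all_fingroup all_solvable all_field all_character.
Set Implicit Arguments. Unset Strict Implicit. Unset Printing Implicit Defensive.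
Import Order.TTheory GRing.Theory Num.Theory.
Local Open Scope ring_scope.

Lemma sylow_ofP (gT : finGroupType) (p : nat) (H : {group gT}) :
  p.-Sylow(H)%g (sylow_of p H).
Proof.
rewrite /sylow_of; case: pickP => [P|] /=; first by rewrite inE.
by case: (@Sylow_exists p gT H) => P sP /(_ P); rewrite inE sP.
Qed.

Section PLevel.

Variables (gT : finGroupType) (H : {group gT}) (p : nat).
Let S := sylow_of p H.

Lemma card_sylow_of : #|S| = (#|H|`_p)%N.
Proof. exact: card_Hall (sylow_ofP p H). Qed.

Lemma pvanishing_Res_sylow (psi : 'CF(H)) :
  p_vanishing p psi -> exists n : nat, 'Res[S] psi = n%:R *: cfReg S.
Proof.
move=> [Npsi van]; have sylS := sylow_ofP p H.
have sSH : S \subset H by case/andP: sylS.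
have vanS x : x \in S -> x != 1%g -> psi x = 0.
  move=> xS ntx; apply: van; first exact: subsetP xS.
  rewrite -(pdiv_p_elt (mem_p_elt (pHall_pgroup sylS) xS) ntx).
  exact: pdiv_dvd.
(* The multiplicity of the trivial character of S in 'Res[S] psi is psi(1)/|S|. *)
have /natrP[n psi1E] : psi 1%g / #|S|%:R \is a Num.nat.
  have := Cnat_cfdot_char_irr 0 (cfRes_char S Npsi).
  rewrite irr0 cfdotE (bigD1 1%g) //= big1 ?addr0; last first.
    by move=> x /andP[xS ntx]; rewrite cfResE // vanS // mul0r.
  by rewrite cfResE // cfun1E group1 conjC1 mulr1 mulrC.
exists n; apply: cfun_inP => x xS; rewrite cfResE // cfunE cfRegE.
have [->|ntx] := eqVneq x 1%g; last by rewrite vanS // mulr0n mulr0.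
have S_neq0 : (#|S|%:R : algC) != 0 by rewrite pnatr_eq0 -lt0n cardG_gt0.
by rewrite mulr1n -psi1E mulfVK.
Qed.

Lemma plevel_Res_sylow (psi : 'CF(H)) (n : nat) :
  'Res[S] psi = n%:R *: cfReg S -> plevel p psi = n.
Proof.
move=> ResE; have S_gt0 : (0 < #|S|)%N by apply: cardG_gt0.
have psi1E : psi 1%g = n%:R * #|S|%:R.
  by rewrite -(cfRes1 S) ResE cfunE cfRegE eqxx mulr1n.
apply/eqP; rewrite eqn_leq /plevel -/S; apply/andP; split.
  apply/bigmax_leqP => l; rewrite ResE -scalerBl => /char1_ge0.
  by rewrite cfunE cfRegE eqxx mulr1n pmulr_lge0 ?ltr0n // subr_ge0 ler_nat.
have n_lt : (n < (Num.truncn (psi 1%g)).+1)%N.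
  by rewrite ltnS truncn_ge_nat psi1E -natrM ?ler_nat ?leq_pmulr ?ler0n.
apply: (leq_bigmax_cond (Ordinal n_lt)) => /=.
by rewrite ResE subrr rpred0.
Qed.

Lemma plevel_pvanishing (psi : 'CF(H)) :
  p_vanishing p psi -> psi 1%g = (plevel p psi)%:R * (#|H|`_p)%:R.
Proof.
move=> pv_psi; have [n ResE] := pvanishing_Res_sylow pv_psi.
rewrite (plevel_Res_sylow ResE) -card_sylow_of -(cfRes1 S) ResE.
by rewrite cfunE cfRegE eqxx mulr1n.
Qed.

End PLevel.

Section DirectProduct.

Variables (gT : finGroupType) (G G1 G2 : {group gT}).
Hypothesis G1xG2 : (G1 \x G2)%g = G.

Lemma dprod_order_dvdr (x y : gT) :
  x \in G1 -> y \in G2 -> (#[y]%g %| #[x * y]%g)%N.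
Proof.
move=> xG1 yG2; have [_ _ cG12 tiG12] := dprodP G1xG2.
have cxy : commute x y by apply: commute_sym; apply: (centsP cG12).
set n := #[x * y]%g.
have y_n : (y ^+ n = (x ^+ n)^-1)%g.
  by apply/eqP; rewrite eq_sym eq_invg_mul -expgMn // expg_order.
rewrite order_dvdn; apply/eqP/set1gP.
by rewrite -tiG12 inE (groupX _ yG2) andbT y_n groupV groupX.
Qed.

Definition dprod_slice (phi : 'CF(G)) (i : Iirr G1) : 'CF(G2) :=
  \sum_j '[phi, 'chi_(dprod_Iirr G1xG2 (i, j))] *: 'chi_j.

Lemma cfun_dprod_slice (phi : 'CF(G)) :
  phi = \sum_i cfDprod G1xG2 'chi_i (dprod_slice phi i).
Proof.
rewrite {1}[phi]cfun_sum_cfdot (reindex (dprod_Iirr G1xG2)) /=; last first.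
  by exists (inv_dprod_Iirr G1xG2) => k _; rewrite ?dprod_IirrK ?inv_dprod_IirrK.
rewrite -(pair_big xpredT xpredT (fun i j =>
   '[phi, 'chi_(dprod_Iirr G1xG2 (i, j))] *: 'chi_(dprod_Iirr G1xG2 (i, j)))).
apply: eq_bigr => i _; rewrite /cfDprod /dprod_slice linear_sum mulr_sumr.
by apply: eq_bigr => j _; rewrite dprod_IirrE linearZ /= -scalerAr.
Qed.

Lemma dprod_slice_char (phi : 'CF(G)) i :
  phi \is a character -> dprod_slice phi i \is a character.
Proof.
move=> Nphi; apply: rpred_sum => j _.
have /natrP[m ->] := Cnat_cfdot_char_irr (dprod_Iirr G1xG2 (i, j)) Nphi.
by rewrite rpredZnat ?irr_char.
Qed.

Lemma dprod_slice_eq0 (phi : 'CF(G)) i y : y \in G2 ->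
  (forall x, x \in G1 -> phi (x * y)%g = 0) -> dprod_slice phi i y = 0.
Proof.
move=> yG2 phi0.
(* The slices at y are the coordinates of x |-> phi(x y) in the basis irr G1. *)
have phi_y0 : \sum_k dprod_slice phi k y *: 'chi_k = 0 :> 'CF(G1).
  apply/cfun_inP => x xG1; rewrite cfunE -(phi0 x xG1) sum_cfunE.
  rewrite {2}[phi]cfun_dprod_slice sum_cfunE; apply: eq_bigr => k _.
  by rewrite cfunE cfDprodE // mulrC.
have := congr1 (cfdotr 'chi_i) phi_y0; rewrite /cfdotr /= cfdot0l cfdot_suml.
rewrite (bigD1 i) //= big1 ?addr0 => [|k nki]; rewrite cfdotZl cfdot_irr.
  by rewrite eqxx mulr1.
by rewrite (negPf nki) mulr0.
Qed.

Lemma dprod_slice_pvanishing (p : nat) (phi : 'CF(G)) i :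
  p_vanishing p phi -> p_vanishing p (dprod_slice phi i).
Proof.
move=> [Nphi van]; split; first exact: dprod_slice_char.
move=> y yG2 p_y; apply: dprod_slice_eq0 => // x xG1.
apply: van; first by rewrite -(dprodW G1xG2) mem_mulg.
exact: dvdn_trans p_y (dprod_order_dvdr xG1 yG2).
Qed.

Variables (p : nat) (chi : 'CF(G)).
Hypothesis pv_chi : p_vanishing p chi.

Definition dprod_levelled : 'CF(G1) :=
  \sum_i (plevel p (dprod_slice chi i))%:R *: 'chi_i.

Lemma dprod_levelledE x :
  x \in G1 -> chi x = (#|G2|`_p)%:R * dprod_levelled x.
Proof.
move=> xG1; rewrite -{1}[x]mulg1 {1}[chi]cfun_dprod_slice !sum_cfunE mulr_sumr.
apply: eq_bigr => i _; rewrite cfDprodE // cfunE.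
rewrite (plevel_pvanishing (dprod_slice_pvanishing i pv_chi)).
by rewrite mulrC mulrAC mulrC.
Qed.

Let Gp_neq0 : (#|G2|`_p)%:R != 0 :> algC.
Proof. by rewrite pnatr_eq0 -lt0n part_gt0. Qed.

Lemma dprod_levelled_pvanishing : p_vanishing p dprod_levelled.
Proof.
split; first by apply: rpred_sum => i _; rewrite rpredZnat ?irr_char.
move=> x xG1 p_x; have xG : x \in G.
  by rewrite -(dprodW G1xG2) -[x]mulg1 mem_mulg.
have /eqP := pv_chi.2 x xG p_x; rewrite dprod_levelledE //.
by rewrite mulf_eq0 (negPf Gp_neq0) => /eqP.
Qed.

Lemma plevel_dprod_levelled : plevel p dprod_levelled = plevel p chi.
Proof.
have := dprod_levelledE (group1 G1).
rewrite (plevel_pvanishing pv_chi).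
rewrite (plevel_pvanishing dprod_levelled_pvanishing).
rewrite -(dprod_card G1xG2) partnM ?cardG_gt0 // -!natrM => /eqP.
rewrite eqr_nat (mulnCA (#|G2|`_p)%N) (mulnC (#|G2|`_p)%N).
by rewrite eqn_pmul2r ?muln_gt0 ?part_gt0 // => /eqP ->.
Qed.

End DirectProduct.

Theorem lemma2p6 (gT : finGroupType) (G G1 G2 : {group gT})
    (G1xG2 : (G1 \x G2)%g = G) (p : nat) (chi : 'CF(G)) :
  prime p -> (1 < #|G2|`_p)%N -> p_vanishing p chi ->
  exists (n : nat) (eta : 'I_n -> 'CF(G1)) (sigma : 'I_n -> 'CF(G2)),
    [/\ injective eta,
        (forall i, eta i \in irr G1),
        (forall i, p_vanishing p (sigma i)),
        chi = \sum_(i < n) cfDprod G1xG2 (eta i) (sigma i)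
      & let chi1 := \sum_(i < n) ((plevel p (sigma i))%:R *: eta i) in
        p_vanishing p chi1 /\ plevel p chi1 = plevel p chi].
Proof.
move=> _ _ pv_chi.
exists (Nirr G1), (fun i => 'chi_i), (dprod_slice G1xG2 chi); split.
- exact: irr_inj.
- exact: mem_irr.
- by move=> i; apply: dprod_slice_pvanishing.
- exact: cfun_dprod_slice.
split; first exact: dprod_levelled_pvanishing.
exact: plevel_dprod_levelled.
Qed.
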